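(* Fix $i\in\mathcal N$. Suppose the subsystem $\mathcal G_i$ is QSR-dissipative with storage function $V_i$ and matrices $\mathbf Q_i\in\mathbb S^{n_y}$ with $\mathbf Q_i\prec 0$, $\mathbf S_i\in\mathbb R^{n_y\times n_u}$, $\mathbf R_i\in\mathbb S^{n_u}$. Suppose the scheduling matrices $\boldsymbol\Phi_{u,i},\boldsymbol\Phi_{y,i}$ pseudo-commute with $\mathbf S_i$, i.e. $\boldsymbol\Phi_{y,i}(t)^\top\mathbf S_i=\mathbf S_i\boldsymbol\Phi_{u,i}(t)$ for all $t\ge 0$, and that $\boldsymbol\Phi_{y,i}(t)\neq\mathbf 0$ for some $t\ge0$. Define $\bar\sigma_{y,i}=\sup_{t\ge0}\sigma_{y,i}(t)$, $\bar\sigma_{u,i}=\sup_{t\ge0}\sigma_{u,i}(t)$, $\bar\nu_{u,i}=\inf_{t\ge0}\nu_{u,i}(t)$, $\varepsilon_i=-\lambda_{\max}(\mathbf Q_i)>0$, and $\delta_i=\lambda_{\max}(\mathbf R_i)\bar\sigma_{y,i}^2\bar\sigma_{u,i}^2$ if $\lambda_{\max}(\mathbf R_i)>0$, $\delta_i=\lambda_{\max}(\mathbf R_i)\bar\sigma_{y,i}^2\bar\nu_{u,i}^2$ if $\lambda_{\max}(\mathbf R_i)\le 0$. Then the scheduled subsystem $\bar{\mathcal G}_i:\mathbf u\mapsto\bar{\mathbf y}_i=\boldsymbol\Phi_{y,i}\mathcal G_i(\boldsymbol\Phi_{u,i}\mathbf u)$ is QSR-dissipative with storage function $\bar\sigma_{y,i}^2V_i$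 and matrices $\bar{\mathbf Q}_i=-\varepsilon_i\mathbf 1$, $\bar{\mathbf S}_i=\bar\sigma_{y,i}^2\mathbf S_i$, $\bar{\mathbf R}_i=\delta_i\mathbf 1$; that is, for all $\mathbf u\in\mathcal L_{2e}$ and $T\ge0$, $\bar\sigma_{y,i}^2\big(V_i(\mathbf x_i(T))-V_i(\mathbf x_i(0))\big)\le -\varepsilon_i\|\bar{\mathbf y}_i\|_{2T}^2+2\bar\sigma_{y,i}^2\langle\bar{\mathbf y}_i,\mathbf S_i\mathbf u\rangle_T+\delta_i\|\mathbf u\|_{2T}^2.$
   Context: Signals: for $\mathbf u,\mathbf y:\mathbb R_{\ge0}\to\mathbb R^n$, $\langle\mathbf u,\mathbf y\rangle_T=\int_0^T\mathbf u(t)^\top\mathbf y(t)\,dt$ and $\|\mathbf u\|_{2T}^2=\langle\mathbf u,\mathbf u\rangle_T$; $\mathcal L_{2e}$ is the set of piecewise continuous signals with $\|\mathbf u\|_{2T}<\infty$ for all $T\ge0$. $\mathbb S^n$ denotes real symmetric $n\times n$ matrices, $\mathbf 1$ the identity. A causal system $\dot{\mathbf x}=\mathbf f(\mathbf x,\mathbf u)$, $\mathbf y=\mathbf h(\mathbf x,\mathbf u)$ with $\mathbf x\in\mathbb R^{n_x},\mathbf u\in\mathbb R^{n_u},\mathbf y\in\mathbb R^{n_y}$ is QSR-dissipative with $\mathbf Q\in\mathbb S^{n_y}$, $\mathbf S\in\mathbb R^{n_y\times n_u}$, $\mathbf R\in\mathbb S^{n_u}$ if there is a storage function $V:\mathbb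 R^{n_x}\to\mathbb R_{\ge0}$ with $\langle\mathbf y,\mathbf Q\mathbf y\rangle_T+2\langle\mathbf y,\mathbf S\mathbf u\rangle_T+\langle\mathbf u,\mathbf R\mathbf u\rangle_T\ge V(\mathbf x(T))-V(\mathbf x(0))$ for all $\mathbf u\in\mathcal L_{2e}$, $T\ge0$. Gain-scheduled system: $\mathcal N=\{1,\dots,N\}$; subsystems $\mathcal G_i$ with state $\mathbf x_i$, input $\mathbf u_i\in\mathbb R^{n_u}$, output $\mathbf y_i=\mathcal G_i(\mathbf u_i)\in\mathbb R^{n_y}$. Scheduling matrices $\boldsymbol\Phi_{u,i}:\mathbb R_{\ge0}\to\mathbb R^{n_u\times n_u}$, $\boldsymbol\Phi_{y,i}:\mathbb R_{\ge0}\to\mathbb R^{n_y\times n_y}$ are piecewise continuous and bounded: $\sup_{t\ge0}\|\boldsymbol\Phi_{j,i}(t)\|_2<\infty$. The scheduled signals are $\mathbf u_i(t)=\boldsymbol\Phi_{u,i}(t)\mathbf u(t)$, $\bar{\mathbf y}_i(t)=\boldsymbol\Phi_{y,i}(t)\mathbf y_i(t)$, and the overall gain-scheduled system $\bar{\mathcal G}$ has input $\mathbf u$, state $(\mathbf x_1,\dots,\mathbf x_N)$ and output $\mathbf y(t)=\sum_{i\in\mathcal N}\bar{\mathbf y}_i(t)$. Notation: $\sigma_{y,i}(t)$ is the largest singular value of $\boldsymbol\Phi_{y,i}(t)$; $\sigma_{u,i}(t)$ and $\nu_{u,i}(t)$ are the largest and smallest singular values of $\boldsymbol\Phi_{u,i}(t)$.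 *)

From HB Require Import structures.
From mathcomp Require Import all_boot all_order all_algebra.
From mathcomp Require Import all_classical all_reals all_analysis.
Set Implicit Arguments. Unset Strict Implicit. Unset Printing Implicit Defensive.
Import Order.TTheory GRing.Theory Num.Theory.
Import numFieldNormedType.Exports.
Local Open Scope classical_set_scope.
Local Open Scope ring_scope.

Section Defs.
Variable R : realType.

Definition I0 (T : R) : set R := [set t : R | 0 <= t <= T].

Definition piecewise_continuous (m n : nat) (f : R -> 'M[R]_(m, n)) : Prop :=
  forall T : R, exists s : seq R,
    (forall t : R, 0 < t -> t <= T -> t \notin s -> {for t, continuous f}) /\
    (forall t : R, 0 < t -> t <= T -> cvg (f @ t^'-)) /\
    (forall t : R, 0 <= t -> t <= T -> cvg (f @ t^'+)).

Definition vdot (n : nat) (a b : 'cV[R]_n) : R := (a^T *m b) 0 0.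

Definition inner (n : nat) (u y : R -> 'cV[R]_n) (T : R) : R :=
  Rintegral lebesgue_measure (I0 T) (fun t => vdot (u t) (y t)).

Definition norm2T2 (n : nat) (u : R -> 'cV[R]_n) (T : R) : R := inner u u T.

Definition loc_L2 (n : nat) (u : R -> 'cV[R]_n) : Prop :=
  forall T, 0 <= T ->
    lebesgue_measure.-integrable (I0 T) (fun t => (vdot (u t) (u t))%:E).

Definition L2e (n : nat) (u : R -> 'cV[R]_n) : Prop :=
  piecewise_continuous u /\ loc_L2 u.

(* (Caratheodory) trajectory of xdot = f(x,u), y = h(x,u) driven by u:
   x(t) = x(0) + int_0^t f(x(s),u(s)) ds  and  y(t) = h(x(t),u(t)), t >= 0. *)
Definition trajectory (nx nu ny : nat)
  (f : 'cV[R]_nx -> 'cV[R]_nu -> 'cV[R]_nx)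
  (h : 'cV[R]_nx -> 'cV[R]_nu -> 'cV[R]_ny)
  (u : R -> 'cV[R]_nu) (x : R -> 'cV[R]_nx) (y : R -> 'cV[R]_ny) : Prop :=
  forall t, 0 <= t ->
    y t = h (x t) (u t) /\
    forall i : 'I_nx,
      lebesgue_measure.-integrable (I0 t) (fun s => (f (x s) (u s) i 0)%:E) /\
      x t i 0 = x 0 i 0 + Rintegral lebesgue_measure (I0 t) (fun s => f (x s) (u s) i 0).

(* Standing well-posedness: the system maps L_2e inputs to outputs with
   finite ||y||_{2T} (so that the inner products in the supply rate exist). *)
Definition L2e_outputs (nx nu ny : nat)
  (f : 'cV[R]_nx -> 'cV[R]_nu -> 'cV[R]_nx)
  (h : 'cV[R]_nx -> 'cV[R]_nu -> 'cV[R]_ny) : Prop :=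
  forall u x y, L2e u -> trajectory f h u x y -> loc_L2 y.

Definition QSR_dissipative (nx nu ny : nat)
  (f : 'cV[R]_nx -> 'cV[R]_nu -> 'cV[R]_nx)
  (h : 'cV[R]_nx -> 'cV[R]_nu -> 'cV[R]_ny)
  (V : 'cV[R]_nx -> R) (Q : 'M[R]_ny) (S : 'M[R]_(ny, nu)) (Rm : 'M[R]_nu)
  : Prop :=
  (forall z, 0 <= V z) /\
  forall u x y (T : R), L2e u -> trajectory f h u x y -> 0 <= T ->
    inner y (fun t => Q *m y t) T + 2 * inner y (fun t => S *m u t) T
      + inner u (fun t => Rm *m u t) T >= V (x T) - V (x 0).

Definition sym_mx (n : nat) (A : 'M[R]_n) : Prop := A^T = A.
Definition neg_def (n : nat) (A : 'M[R]_n) : Prop :=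
  forall z : 'cV[R]_n, z != 0 -> vdot z (A *m z) < 0.

Definition lambda_max (n : nat) (A : 'M[R]_n) : R := sup [set a : R | eigenvalue A a].
Definition lambda_min (n : nat) (A : 'M[R]_n) : R := inf [set a : R | eigenvalue A a].

Definition sigma_max (n : nat) (A : 'M[R]_n) : R := Num.sqrt (lambda_max (A^T *m A)).
Definition sigma_min (n : nat) (A : 'M[R]_n) : R := Num.sqrt (lambda_min (A^T *m A)).

Definition scheduling_matrix (n : nat) (Phi : R -> 'M[R]_n) : Prop :=
  piecewise_continuous Phi /\
  exists M : R, forall t, 0 <= t -> sigma_max (Phi t) <= M.

Definition sup_t (g : R -> R) : R := sup [set g t | t in [set t : R | 0 <= t]].
Definition inf_t (g : R -> R) : R := inf [set g t | t in [set t : R | 0 <= t]].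

End Defs.

From HB Require Import structures.
From mathcomp Require Import all_boot all_order all_algebra.
From mathcomp Require Import all_classical all_reals all_analysis.
From mathcomp Require Import lra ring measurable_realfun.
Import Order.TTheory GRing.Theory Num.Theory.
Import numFieldNormedType.Exports.
Local Open Scope classical_set_scope.
Local Open Scope ring_scope.
Set Implicit Arguments. Unset Strict Implicit. Unset Printing Implicit Defensive.

(* Pointwise in time, the dissipation inequality of the subsystem driven by the
   scheduled input [Phiu u] becomes the claimed one after multiplication by
   [sy^2], through three estimates:
   - [sy^2 y'Qy <= sy^2 lambda_max(Q) |y|^2 <= - eps |Phiy y|^2], because
     [|Phiy y| <= sy |y|];
   - pseudo-commutation turns [y' S Phiu u] into [(Phiy y)' S u];
   - [(Phiu u)' Rm (Phiu u) <= lambda_max(Rm) |Phiu u|^2], where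
     [nuu^2 |u|^2 <= |Phiu u|^2 <= su^2 |u|^2] and the sign of [lambda_max(Rm)]
     decides which bound applies.
   The spectral input, [z'Az <= lambda_max(A) |z|^2] for symmetric [A], comes
   from showing that the supremum of the Rayleigh quotient is an eigenvalue.
   The output [y] need not be measurable, so its terms are integrated using
   only monotonicity and homogeneity of the integral of nonnegative functions,
   which hold without measurability. *)

Section VectorDot.
Variable R : realType.
Implicit Types n m : nat.

Lemma vdotE n (a b : 'cV[R]_n) : vdot a b = \sum_i a i 0 * b i 0.
Proof. by rewrite /vdot mxE; apply: eq_bigr => i _; rewrite mxE. Qed.

Lemma vdotC n (a b : 'cV[R]_n) : vdot a b = vdot b a.
Proof. by rewrite !vdotE; apply: eq_bigr => i _; rewrite mulrC. Qed.

Lemma vdot_ge0 n (a : 'cV[R]_n) : 0 <= vdot a a.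
Proof. by rewrite vdotE; apply: sumr_ge0 => i _; rewrite -expr2 sqr_ge0. Qed.

Lemma vdot_gt0 n (a : 'cV[R]_n) : a != 0 -> 0 < vdot a a.
Proof.
move=> a0; rewrite lt_neqAle vdot_ge0 andbT; apply: contra a0.
rewrite eq_sym vdotE => /eqP/psumr_eq0P sum0; apply/eqP/matrixP => i j.
have /(_ i isT)/eqP := sum0 (fun k _ => sqr_ge0 (a k 0)).
by rewrite (ord1 j) mxE -expr2 sqrf_eq0 => /eqP.
Qed.

Lemma vdotDr n (a b c : 'cV[R]_n) : vdot a (b + c) = vdot a b + vdot a c.
Proof. by rewrite /vdot mulmxDr mxE. Qed.

Lemma vdotZr n (a b : 'cV[R]_n) k : vdot a (k *: b) = k * vdot a b.
Proof. by rewrite /vdot -scalemxAr mxE. Qed.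

Lemma vdotNr n (a b : 'cV[R]_n) : vdot a (- b) = - vdot a b.
Proof. by rewrite -scaleN1r vdotZr mulN1r. Qed.

Lemma vdotDl n (a b c : 'cV[R]_n) : vdot (b + c) a = vdot b a + vdot c a.
Proof. by rewrite vdotC vdotDr !(vdotC a). Qed.

Lemma vdotZl n (a b : 'cV[R]_n) k : vdot (k *: b) a = k * vdot b a.
Proof. by rewrite vdotC vdotZr vdotC. Qed.

Lemma vdotNl n (a b : 'cV[R]_n) : vdot (- b) a = - vdot b a.
Proof. by rewrite vdotC vdotNr vdotC. Qed.

Lemma vdot_mulmx n m (a : 'cV[R]_n) (A : 'M[R]_(n, m)) (b : 'cV[R]_m) :
  vdot a (A *m b) = vdot (A^T *m a) b.
Proof. by rewrite /vdot trmx_mul trmxK mulmxA. Qed.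

Lemma vdot_mulmx_sqr n m (P : 'M[R]_(m, n)) (z : 'cV[R]_n) :
  vdot (P *m z) (P *m z) = vdot z ((P^T *m P) *m z).
Proof. by rewrite vdotC vdot_mulmx mulmxA. Qed.

Lemma sqr_coord_le_vdot n (a : 'cV[R]_n) i : a i 0 ^+ 2 <= vdot a a.
Proof.
rewrite vdotE (bigD1 i) //= -expr2 lerDl.
by apply: sumr_ge0 => j _; rewrite -expr2 sqr_ge0.
Qed.

Lemma quad_form_bounded n (A : 'M[R]_n) :
  exists2 K, 0 <= K & forall z, `|vdot z (A *m z)| <= K * vdot z z.
Proof.
exists (\sum_i \sum_j `|A i j|) => [|z]; first by do 2!apply: sumr_ge0 => ? _.
have -> : vdot z (A *m z) = \sum_i \sum_j z i 0 * A i j * z j 0.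
  rewrite vdotE; apply: eq_bigr => i _; rewrite mxE mulr_sumr.
  by apply: eq_bigr => j _; rewrite mulrA.
rewrite mulr_suml; apply: le_trans (ler_norm_sum _ _ _) _; apply: ler_sum => i _.
rewrite mulr_suml; apply: le_trans (ler_norm_sum _ _ _) _; apply: ler_sum => j _.
have zizj : `|z i 0| * `|z j 0| <= vdot z z.
  have := sqr_ge0 (`|z i 0| - `|z j 0|).
  have := sqr_coord_le_vdot z i; have := sqr_coord_le_vdot z j.
  rewrite sqrrB !real_normK ?num_real // mulr2n; lra.
by rewrite !normrM mulrAC [X in X <= _]mulrC ler_wpM2l.
Qed.

Lemma eigenvalue_symP n (A : 'M[R]_n) a : A^T = A -> eigenvalue A a ->
  exists2 z : 'cV[R]_n, z != 0 & A *m z = a *: z.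
Proof.
move=> symA /eigenvalueP[v vA v0]; exists v^T.
  by rewrite -(trmx0 R) (inj_eq (@trmx_inj _ _ _)).
by rewrite -symA -trmx_mul vA linearZ.
Qed.

Lemma psd_vdot_mulmx_le n (P : 'M[R]_n) : P^T = P ->
  (forall z, 0 <= vdot z (P *m z)) ->
  exists2 K, 0 < K & forall z, vdot (P *m z) (P *m z) <= K * vdot z (P *m z).
Proof.
move=> symP psdP; have [K0 K0_ge0 boundP] := quad_form_bounded P.
have K_gt0 : 0 < K0 + 1 by rewrite ltr_wpDl.
exists (K0 + 1) => // z; set K := K0 + 1; set w := P *m z; set t := K^-1.
have t_gt0 : 0 < t by rewrite invr_gt0.
have tK : t * K = 1 by rewrite mulVf ?gt_eqF.
set s := vdot w w; set s' := vdot w (P *m w).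
have Pw : t * s' <= s.
  rewrite -[X in _ <= X]mul1r -tK -mulrA ler_pM2l //.
  apply/ler_normlW/(le_trans (boundP w)).
  by rewrite ler_wpM2r ?vdot_ge0 ?lerDl.
(* Cauchy-Schwarz for the form of [P]: evaluate it at [z - K^-1 P z]. *)
have := psdP (z - t *: w).
rewrite mulmxBr -scalemxAr vdotDl vdotNl vdotZl !vdotDr !vdotNr !vdotZr.
have -> : vdot z (P *m w) = vdot w w by rewrite vdot_mulmx symP vdotC.
rewrite -/w -/s -/s' => pos; have {pos} : 0 <= vdot z w - t * s.
  by have := ler_wpM2l (ltW t_gt0) Pw; lra.
by rewrite subr_ge0 => ts_le; rewrite -(ler_pM2l t_gt0) mulrA tK mul1r.
Qed.

End VectorDot.

Section Rayleigh.
Variable R : realType.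

Lemma psd_unitmx_coercive n (P : 'M[R]_n) : P^T = P ->
  (forall z, 0 <= vdot z (P *m z)) -> P \in unitmx ->
  exists2 k, 0 < k & forall z, k * vdot z z <= vdot z (P *m z).
Proof.
move=> symP psdP unitP; have [K K_gt0 PK] := psd_vdot_mulmx_le symP psdP.
have [L0 L0_ge0 invP_bound] := quad_form_bounded ((invmx P)^T *m invmx P).
have L_gt0 : 0 < L0 + 1 by rewrite ltr_wpDl.
exists ((K * (L0 + 1))^-1) => [|z]; first by rewrite invr_gt0 mulr_gt0.
have z_le : vdot z z <= (L0 + 1) * vdot (P *m z) (P *m z).
  rewrite -[in X in X <= _](mulKmx unitP z) [X in X <= _]vdot_mulmx_sqr.
  apply/ler_normlW/(le_trans (invP_bound _)).
  by rewrite ler_wpM2r ?vdot_ge0 ?lerDl.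
rewrite mulrC ler_pdivrMr ?mulr_gt0 //; apply: le_trans z_le _.
apply: le_trans (ler_wpM2l (ltW L_gt0) (PK z)) _.
by rewrite [leRHS]mulrC mulrA (mulrC (L0 + 1)).
Qed.

Section SupRayleighQuotient.
Variables (n : nat) (A : 'M[R]_n.+1).
Hypothesis symA : A^T = A.

Let rayleigh_quotients :=
  [set vdot z (A *m z) / vdot z z | z in [set z : 'cV[R]_n.+1 | z != 0]].

Let rayleigh_quotients_ub : has_ubound rayleigh_quotients.
Proof.
have [K _ bound] := quad_form_bounded A.
exists K => _ [z /= z0 <-]; rewrite ler_pdivrMr ?vdot_gt0 //.
exact/ler_normlW/bound.
Qed.

Let rayleigh_quotients_neq0 : rayleigh_quotients !=set0.
Proof.
pose e : 'cV[R]_n.+1 := delta_mx ord0 ord0.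
have e0 : e != 0.
  by apply/negP => /eqP/matrixP/(_ ord0 ord0)/eqP; rewrite !mxE oner_eq0.
by exists (vdot e (A *m e) / vdot e e), e.
Qed.

Let c := sup rayleigh_quotients.

Let quad_le_sup z : vdot z (A *m z) <= c * vdot z z.
Proof.
have [->|z0] := eqVneq z 0; first by rewrite /vdot trmx0 !mul0mx mxE mulr0.
have := ub_le_sup rayleigh_quotients_ub (ex_intro2 _ _ z z0 erefl).
by rewrite ler_pdivrMr ?vdot_gt0.
Qed.

(* [c%:M - A] is positive semidefinite; were it invertible it would be coercive,
   contradicting that [c] is the least upper bound of the Rayleigh quotients. *)
Let sup_eigenvalue : eigenvalue A c.
Proof.
set P := c%:M - A.
apply/eigenvalueP; suff /eqP/det0P[v v0 vP] : \det P = 0.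
  exists v => //; move/eqP: vP; rewrite mulmxBr mul_mx_scalar subr_eq0.
  by move=> /eqP.
have symP : P^T = P by rewrite /P linearB /= tr_scalar_mx symA.
have PzE z : vdot z (P *m z) = c * vdot z z - vdot z (A *m z).
  by rewrite mulmxBl mul_scalar_mx vdotDr vdotNr vdotZr.
have psdP z : 0 <= vdot z (P *m z) by rewrite PzE subr_ge0.
apply/eqP/negPn/negP => detP.
have unitP : P \in unitmx by rewrite unitmxE unitfE.
have [k k_gt0 coerc] := psd_unitmx_coercive symP psdP unitP.
have [_ [z /= z0 <-]] :=
  sup_adherent k_gt0 (conj rayleigh_quotients_neq0 rayleigh_quotients_ub).
rewrite -/c ltr_pdivlMr ?vdot_gt0 // mulrBl => ray.
by have := coerc z; rewrite PzE leNgt; lra.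
Qed.

Let eigenvalue_le_sup a : eigenvalue A a -> a <= c.
Proof.
move=> /(eigenvalue_symP symA)[z z0 Az].
by have := quad_le_sup z; rewrite Az vdotZr ler_pM2r ?vdot_gt0.
Qed.

Let lambda_max_sup : lambda_max A = c.
Proof.
apply/eqP; rewrite eq_le; apply/andP; split.
  by apply: ge_sup; [exists c | move=> a; exact: eigenvalue_le_sup].
by apply: ub_le_sup; [exists c => a; exact: eigenvalue_le_sup|].
Qed.

Lemma lambda_max_eigenvalue : eigenvalue A (lambda_max A).
Proof. by rewrite lambda_max_sup. Qed.

Lemma quad_le_lambda_maxS z : vdot z (A *m z) <= lambda_max A * vdot z z.
Proof. by rewrite lambda_max_sup. Qed.

End SupRayleighQuotient.

Lemma quad_le_lambda_max n (A : 'M[R]_n) z : A^T = A ->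
  vdot z (A *m z) <= lambda_max A * vdot z z.
Proof.
case: n A z => [A z _|n A z symA]; last exact: quad_le_lambda_maxS.
by rewrite !vdotE !big_ord0 mulr0.
Qed.

Lemma lambda_minE n (A : 'M[R]_n) : lambda_min A = - lambda_max (- A).
Proof.
rewrite /lambda_min /lambda_max /inf; congr (- sup _).
apply/seteqP; split => a /=.
  move=> [b /eigenvalueP [v vA v0] <-]; apply/eigenvalueP; exists v => //.
  by rewrite mulmxN vA scaleNr.
move/eigenvalueP => [v vA v0]; exists (- a); last by rewrite opprK.
by apply/eigenvalueP; exists v => //; rewrite -[A]opprK mulmxN vA scaleNr.
Qed.

Lemma lambda_min_le_quad n (A : 'M[R]_n) z : A^T = A ->
  lambda_min A * vdot z z <= vdot z (A *m z).
Proof.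
move=> symA; have symNA : (- A)^T = - A by rewrite linearN /= symA.
have := quad_le_lambda_max z symNA.
by rewrite mulNmx vdotNr lambda_minE mulNr lerNl.
Qed.

Lemma neg_def_lambda_max_lt0 n (Q : 'M[R]_n) : (0 < n)%N ->
  Q^T = Q -> neg_def Q -> lambda_max Q < 0.
Proof.
case: n Q => // n Q _ symQ negQ.
have [z z0 Qz] := eigenvalue_symP symQ (lambda_max_eigenvalue symQ).
by have := negQ z z0; rewrite Qz vdotZr pmulr_llt0 ?vdot_gt0.
Qed.

End Rayleigh.

Section SingularValues.
Variable R : realType.

Lemma vdot_mulmx_le_sigma_max n (P : 'M[R]_n) z :
  vdot (P *m z) (P *m z) <= sigma_max P ^+ 2 * vdot z z.
Proof.
have symPP : (P^T *m P)^T = P^T *m P by rewrite trmx_mul trmxK.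
rewrite vdot_mulmx_sqr; apply: le_trans (quad_le_lambda_max z symPP) _.
rewrite /sigma_max; have [l_ge0|l_lt0] := leP 0 (lambda_max (P^T *m P)).
  by rewrite sqr_sqrtr.
rewrite (ler0_sqrtr (ltW l_lt0)) expr0n /= mul0r.
by rewrite mulr_le0_ge0 ?vdot_ge0 // ltW.
Qed.

Lemma sigma_min_le_vdot_mulmx n (P : 'M[R]_n) z :
  sigma_min P ^+ 2 * vdot z z <= vdot (P *m z) (P *m z).
Proof.
have symPP : (P^T *m P)^T = P^T *m P by rewrite trmx_mul trmxK.
rewrite /sigma_min; have [l_ge0|l_lt0] := leP 0 (lambda_min (P^T *m P)).
  by rewrite sqr_sqrtr // vdot_mulmx_sqr lambda_min_le_quad.
by rewrite (ler0_sqrtr (ltW l_lt0)) expr0n /= mul0r vdot_ge0.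
Qed.

Lemma vdot_mulmx_le n (P : 'M[R]_n) z s : sigma_max P <= s ->
  vdot (P *m z) (P *m z) <= s ^+ 2 * vdot z z.
Proof.
move=> Ps; apply: le_trans (vdot_mulmx_le_sigma_max P z) _.
by rewrite ler_wpM2r ?vdot_ge0 // !expr2 ler_pM ?sqrtr_ge0.
Qed.

Lemma vdot_mulmx_ge n (P : 'M[R]_n) z nu : 0 <= nu -> nu <= sigma_min P ->
  nu ^+ 2 * vdot z z <= vdot (P *m z) (P *m z).
Proof.
move=> nu0 nuP; apply: le_trans (sigma_min_le_vdot_mulmx P z).
by rewrite ler_wpM2r ?vdot_ge0 // !expr2 ler_pM.
Qed.

Lemma mx_neq0_dim_gt0 m n (A : 'M[R]_(m, n)) : A != 0 -> (0 < m)%N.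
Proof. by case: m A => // A; rewrite flatmx0 eqxx. Qed.

Lemma sigma_max_gt0 n (P : 'M[R]_n) : P != 0 -> 0 < sigma_max P.
Proof.
move=> P0; have [j Pj0] : exists j, P *m (delta_mx j 0 : 'cV[R]_n) != 0.
  apply: contrapT => noj; suff : P = 0 by move/eqP: P0.
  apply/matrixP => i j.
  have [/matrixP/(_ i 0)|] := eqVneq (P *m (delta_mx j 0 : 'cV[R]_n)) 0.
    by rewrite -colE !mxE.
  by move=> Pj0; case: noj; exists j.
rewrite lt_neqAle sqrtr_ge0 andbT; apply/eqP => s0.
have := vdot_mulmx_le_sigma_max P (delta_mx j 0).
by rewrite -s0 expr0n /= mul0r leNgt vdot_gt0.
Qed.

End SingularValues.

(* The integral of a nonnegative extended-real function is the supremum of the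
   integrals of the simple functions below it, so it is monotone and
   positively homogeneous even when the integrand is not measurable. *)
Section NonnegativeIntegral.
Context d (T : measurableType d) (R : realType).
Variables (mu : {measure set T -> \bar R}) (D : set T).
Local Open Scope ereal_scope.

Lemma ge0_le_integral_nomeas (f g : T -> \bar R) :
  (forall x, D x -> 0 <= f x) -> (forall x, D x -> f x <= g x) ->
  \int[mu]_(x in D) f x <= \int[mu]_(x in D) g x.
Proof.
move=> f0 fg; have g0 x : D x -> 0 <= g x.
  by move=> Dx; apply: le_trans (fg _ Dx); exact: f0.
rewrite !ge0_integralE //; apply: ereal_sup_le => _ [h hf <-].
by exists h => // x; apply: le_trans (hf x) _; exact: lee_restrict.
Qed.

Import HBNNSimple.

Let ge0_integralZl_nomeas_ge (k : R) (f : T -> \bar R) : (0 < k)%R ->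
  (forall x, D x -> 0 <= f x) ->
  k%:E * \int[mu]_(x in D) f x <= \int[mu]_(x in D) (k%:E * f x).
Proof.
move=> k0 f0; have kf0 x : D x -> 0 <= k%:E * f x.
  by move=> Dx; apply: mule_ge0; [rewrite lee_fin ltW|exact: f0].
rewrite -(lee_pdivlMl _ _ k0) !ge0_integralE //; apply: ge_ereal_sup.
move=> _ [h hf <-]; rewrite (lee_pdivlMl _ _ k0).
apply: ereal_sup_ubound; exists (scale_nnsfun h (ltW k0)); last first.
  by rewrite sintegralrM.
move=> x /=; have := hf x; rewrite /patch; case: ifPn => Dx hx.
  by rewrite EFinM; apply: lee_wpmul2l => //; rewrite lee_fin ltW.
by move: hx; rewrite !lee_fin => hx; rewrite mulr_ge0_le0 // ltW.
Qed.

Lemma ge0_integralZl_nomeas (k : R) (f : T -> \bar R) : (0 < k)%R ->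
  (forall x, D x -> 0 <= f x) ->
  \int[mu]_(x in D) (k%:E * f x) = k%:E * \int[mu]_(x in D) f x.
Proof.
move=> k0 f0; apply/eqP; rewrite eq_le ge0_integralZl_nomeas_ge // andbT.
have ki0 : (0 < k^-1)%R by rewrite invr_gt0.
have kf0 x : D x -> 0 <= k%:E * f x.
  by move=> Dx; apply: mule_ge0; [rewrite lee_fin ltW|exact: f0].
have := ge0_integralZl_nomeas_ge ki0 kf0.
have -> : \int[mu]_(x in D) (k^-1%:E * (k%:E * f x)) = \int[mu]_(x in D) f x.
  by apply: eq_integral => x _; rewrite muleA -EFinM mulVf ?gt_eqF // mul1e.
by rewrite -(lee_pdivlMl _ _ ki0) invrK.
Qed.

Lemma ge0_integral_lty_le (f g : T -> R) (K : R) :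
  (forall x, D x -> 0 <= f x)%R -> (forall x, D x -> 0 <= g x)%R ->
  (forall x, D x -> f x <= K * g x)%R ->
  \int[mu]_(x in D) (g x)%:E < +oo -> \int[mu]_(x in D) (f x)%:E < +oo.
Proof.
move=> f0 g0 fKg g_lty; have K1_gt0 : (0 < `|K| + 1)%R by rewrite ltr_wpDl.
have g0E x : D x -> 0 <= (g x)%:E by move=> Dx; rewrite lee_fin g0.
have K1E : 0 <= (`|K| + 1)%:E by rewrite lee_fin ltW.
apply: le_lt_trans (lte_mul_pinfty K1E _ g_lty) => //.
rewrite -ge0_integralZl_nomeas //; apply: ge0_le_integral_nomeas => x Dx.
  by rewrite lee_fin f0.
rewrite -EFinM lee_fin; apply: le_trans (fKg _ Dx) _.
by rewrite ler_wpM2r ?g0 // (le_trans (ler_norm _)) ?lerDl.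
Qed.

End NonnegativeIntegral.

Section NonnegativeRintegral.
Context d (T : measurableType d) (R : realType).
Variables (mu : {measure set T -> \bar R}) (D : set T).

Lemma ge0_RintegralZl (k : R) (g : T -> R) : 0 < k ->
  (forall x, D x -> 0 <= g x) ->
  Rintegral mu D (fun x => k * g x) = k * Rintegral mu D g.
Proof.
move=> k0 g0; have fineZ (e : \bar R) : fine (k%:E * e)%E = k * fine e.
  by case: e => [r||] /=; rewrite ?gt0_muley ?gt0_muleNy ?mulr0.
by rewrite /Rintegral -fineZ -ge0_integralZl_nomeas.
Qed.

Let Rintegral_lty (g : T -> R) : (forall x, D x -> 0 <= g x) ->
  (\int[mu]_(x in D) (g x)%:E < +oo)%E ->
  ((Rintegral mu D g)%:E = \int[mu]_(x in D) (g x)%:E)%E.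
Proof.
move=> g0 g_lty; rewrite /Rintegral fineK // ge0_fin_numE //.
by apply: integral_ge0 => x Dx; rewrite lee_fin g0.
Qed.

Lemma ge0_le_Rintegral (f g : T -> R) : (forall x, D x -> 0 <= f x) ->
  (forall x, D x -> f x <= g x) -> (\int[mu]_(x in D) (g x)%:E < +oo)%E ->
  Rintegral mu D f <= Rintegral mu D g.
Proof.
move=> f0 fg g_lty.
have g0 x : D x -> 0 <= g x by move=> Dx; apply: le_trans (fg _ Dx); exact: f0.
have fgE : (\int[mu]_(x in D) (f x)%:E <= \int[mu]_(x in D) (g x)%:E)%E.
  by apply: ge0_le_integral_nomeas => x Dx; rewrite lee_fin ?f0 ?fg.
by rewrite -lee_fin !Rintegral_lty //; exact: le_lt_trans fgE g_lty.
Qed.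

Lemma le0_RintegralE (a : T -> R) : (forall x, D x -> a x <= 0) ->
  Rintegral mu D a = - Rintegral mu D (fun x => - a x).
Proof.
move=> a0; rewrite /Rintegral -fineN; congr fine.
have a0E x : D x -> ((a x)%:E <= 0)%E by move=> Dx; rewrite lee_fin a0.
rewrite integralE (eq_integral (cst 0%E)) ?integral0 ?add0e; last first.
  by move=> x Dx; rewrite (le0_funeposE a0E).
congr (- _)%E; apply: eq_integral => x Dx.
by rewrite (le0_funenegE a0E) //= EFinN.
Qed.

End NonnegativeRintegral.

Section PiecewiseContinuous.
Variable R : realType.

Lemma cvg_mx_entries {X : Type} (F : set_system X) {FF : Filter F} m n
    (f : X -> 'M[R]_(m, n)) (M : 'M[R]_(m, n)) :
  (forall i j, (fun x => f x i j) @ F --> M i j) -> f @ F --> M.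
Proof.
move=> fM A [P Pnbhs PA].
have : \forall x \near F, forall i j, P i j (f x i j).
  by do 2!apply: filter_forall => ?; exact: fM.
by apply: filterS => x Px; exact: PA.
Qed.

Lemma cvg_mulmx {X : Type} (F : set_system X) {FF : Filter F} m n p
    (f : X -> 'M[R]_(m, n)) (g : X -> 'M[R]_(n, p))
    (A : 'M[R]_(m, n)) (B : 'M[R]_(n, p)) :
  f @ F --> A -> g @ F --> B -> (fun x => f x *m g x) @ F --> A *m B.
Proof.
move=> fA gB; apply: cvg_mx_entries => i j; rewrite mxE.
under eq_cvg do rewrite mxE.
apply: cvg_big => [|k _]; first exact: add_continuous.
by apply: cvgM; exact: (continuous_cvg _ (@coord_continuous R _ _ _ _ _)).
Qed.

Lemma piecewise_continuous_mulmx m n p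
    (f : R -> 'M[R]_(m, n)) (g : R -> 'M[R]_(n, p)) :
  piecewise_continuous f -> piecewise_continuous g ->
  piecewise_continuous (fun t => f t *m g t).
Proof.
move=> pcf pcg T.
have [s1 [c1 [l1 r1]]] := pcf T; have [s2 [c2 [l2 r2]]] := pcg T.
exists (s1 ++ s2); split; [|split] => t t0 tT.
- rewrite mem_cat negb_or => /andP[ts1 ts2].
  exact: cvg_mulmx (c1 _ t0 tT ts1) (c2 _ t0 tT ts2).
- exact: cvgP (cvg_mulmx (l1 _ t0 tT) (l2 _ t0 tT)).
- exact: cvgP (cvg_mulmx (r1 _ t0 tT) (r2 _ t0 tT)).
Qed.

Lemma measurable_fun_seq (s : seq R) (g : R -> R) : measurable_fun [set` s] g.
Proof.
move=> _ B _; apply: countable_measurable => [t|]; first exact: measurable_set1.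
by apply/finite_set_countable/(sub_finite_set (@subIsetl _ _ _))/finite_seq.
Qed.

Lemma closed_seq (s : seq R) : closed [set` s].
Proof. exact: compact_closed (@Rhausdorff R) (finite_compact (finite_seq s)). Qed.

Lemma piecewise_continuous_measurable m n (f : R -> 'M[R]_(m, n)) T i j :
  piecewise_continuous f -> measurable_fun (I0 T) (fun t => f t i j).
Proof.
move=> /(_ T)[s [cf _]].
set D := `]0, T[%classic `&` ~` [set` s]; set E := [set` [:: 0, T & s]].
have oD : open D.
  by apply: openI; [exact: interval_open|apply: closed_openC; exact: closed_seq].
have mE : measurable E by apply: closed_measurable; exact: closed_seq.
apply: (measurable_funS (E := D `|` E)).
- exact: measurableU (open_measurable oD) mE.
- move=> t /= /andP[t0 tT].
  have [->|t0'] := eqVneq t 0; first by right; rewrite /E /= inE eqxx.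
  have [->|tT'] := eqVneq t T; first by right; rewrite /E /= !inE eqxx orbT.
  have [ts|ts] := boolP (t \in s); first by right; rewrite /E /= !inE ts !orbT.
  left; split; last by apply/negP.
  by rewrite /= in_itv /= !lt_neqAle t0 tT eq_sym t0' tT'.
apply/measurable_funU => //; first exact: open_measurable.
split; last exact: measurable_fun_seq.
apply: open_continuous_measurable_fun => // t; rewrite inE => -[/= tI tns].
move: tI; rewrite in_itv /= => /andP[t0 tT].
apply: continuous_comp (@coord_continuous R m n i j _).
by apply: cf => //; [exact: ltW|apply/negP].
Qed.

End PiecewiseContinuous.

Section ScheduledSignals.
Variable R : realType.
Local Notation mu := (@lebesgue_measure R).

Lemma measurable_I0 (T : R) : measurable (I0 T).
Proof.
rewrite (_ : I0 T = `[0, T]%classic); first exact: measurable_itv.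
by apply/seteqP; split => t /=; rewrite in_itv.
Qed.

Definition measurable_mx_fun (D : set R) m n (f : R -> 'M[R]_(m, n)) :=
  forall i j, measurable_fun D (fun t => f t i j).

Lemma measurable_mx_fun_mulmx (D : set R) m n p (f : R -> 'M[R]_(m, n))
    (g : R -> 'M[R]_(n, p)) :
  measurable_mx_fun D f -> measurable_mx_fun D g ->
  measurable_mx_fun D (fun t => f t *m g t).
Proof.
move=> mf mg i j; under eq_fun do rewrite mxE.
by apply: measurable_sum => k; exact: measurable_funM.
Qed.

Lemma measurable_fun_vdot (D : set R) n (a b : R -> 'cV[R]_n) :
  measurable_mx_fun D a -> measurable_mx_fun D b ->
  measurable_fun D (fun t => vdot (a t) (b t)).
Proof.
move=> ma mb; under eq_fun do rewrite vdotE.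
by apply: measurable_sum => k; exact: measurable_funM.
Qed.

Lemma L2e_measurable n (u : R -> 'cV[R]_n) T :
  L2e u -> measurable_mx_fun (I0 T) u.
Proof. by move=> [pcu _] i j; exact: piecewise_continuous_measurable. Qed.

Lemma loc_L2_lty n (u : R -> 'cV[R]_n) T : loc_L2 u -> 0 <= T ->
  (\int[mu]_(t in I0 T) (vdot (u t) (u t))%:E < +oo)%E.
Proof.
by move=> uL2 T0; apply: integrable_lty; [exact: measurable_I0|exact: uL2].
Qed.

Lemma L2e_mulmx n (Phi : R -> 'M[R]_n) (u : R -> 'cV[R]_n) :
  scheduling_matrix Phi -> L2e u -> L2e (fun t => Phi t *m u t).
Proof.
move=> [pcPhi [M PhiM]] uL2e.
split; first exact: piecewise_continuous_mulmx uL2e.1.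
move=> T T0; have mPu : measurable_mx_fun (I0 T) (fun t => Phi t *m u t).
  apply: measurable_mx_fun_mulmx _ (L2e_measurable uL2e) => i j.
  exact: piecewise_continuous_measurable.
apply/integrableP; split.
  by apply/measurable_EFinP; exact: (measurable_fun_vdot mPu mPu).
under eq_integral do rewrite gee0_abs ?lee_fin ?vdot_ge0 //.
apply: (ge0_integral_lty_le (K := M ^+ 2)) (loc_L2_lty uL2e.2 T0).
- by move=> t _; exact: vdot_ge0.
- by move=> t _; exact: vdot_ge0.
- by move=> t /andP[t0 _]; exact/vdot_mulmx_le/PhiM.
Qed.

Lemma sup_t_ub (g : R -> R) t : (exists M, forall t, 0 <= t -> g t <= M) ->
  0 <= t -> g t <= sup_t g.
Proof.
move=> [M gM] t0; apply: ub_le_sup; last by exists t.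
by exists M => _ [t' /= t'0 <-]; exact: gM.
Qed.

Lemma inf_t_lb (g : R -> R) t : (forall t, 0 <= t -> 0 <= g t) ->
  0 <= t -> inf_t g <= g t.
Proof.
move=> g0 t0; apply: ge_inf; last by exists t.
by exists 0 => _ [t' /= t'0 <-]; exact: g0.
Qed.

Lemma inf_t_ge0 (g : R -> R) : (forall t, 0 <= t -> 0 <= g t) -> 0 <= inf_t g.
Proof.
move=> g0; apply: lb_le_inf => [|_ [t /= t0 <-]]; last exact: g0.
by exists (g 0); exists 0 => //=.
Qed.

End ScheduledSignals.

Section SupplyRate.
Variable R : realType.
Local Notation mu := (@lebesgue_measure R).

Lemma integrable_quad_form n (A : 'M[R]_n) (v : R -> 'cV[R]_n) T :
  L2e v -> 0 <= T ->
  mu.-integrable (I0 T) (fun t => (vdot (v t) (A *m v t))%:E).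
Proof.
move=> vL2e T0; have mv : measurable_mx_fun (I0 T) v := L2e_measurable vL2e.
have mAv : measurable_mx_fun (I0 T) (fun t => A *m v t).
  apply: (measurable_mx_fun_mulmx (f := fun=> A)) mv => i j.
  exact: measurable_cst.
have [K K0 Abound] := quad_form_bounded A.
apply: (@le_integrable _ _ _ mu _ (measurable_I0 T) _
  (fun t => K%:E * (vdot (v t) (v t))%:E)%E).
- by apply/measurable_EFinP; apply: measurable_fun_vdot mv mAv.
- by move=> t _ /=; rewrite lee_fin (ger0_norm (mulr_ge0 K0 (vdot_ge0 _))).
- by apply: integrableZl; [exact: measurable_I0|exact: vL2e.2 T T0].
Qed.

Lemma scheduled_quad_le n (Rm P : 'M[R]_n) z s su nu :
  Rm^T = Rm -> 0 <= nu -> sigma_max P <= su -> nu <= sigma_min P ->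
  s ^+ 2 * vdot (P *m z) (Rm *m (P *m z)) <=
  (if 0 < lambda_max Rm then lambda_max Rm * s ^+ 2 * su ^+ 2
   else lambda_max Rm * s ^+ 2 * nu ^+ 2) * vdot z z.
Proof.
move=> symR nu0 Psu nuP; have s2_ge0 : 0 <= s ^+ 2 by exact: sqr_ge0.
apply: le_trans (ler_wpM2l s2_ge0 (quad_le_lambda_max (P *m z) symR)) _.
rewrite mulrA; case: ifPn => [l_gt0|].
all: rewrite -[in leRHS]mulrA (mulrC (lambda_max Rm)).
  by apply: ler_wpM2l; [exact: mulr_ge0 s2_ge0 (ltW l_gt0)|exact: vdot_mulmx_le].
rewrite -leNgt => l_le0.
by apply: ler_wnM2l; [exact: mulr_ge0_le0|exact: vdot_mulmx_ge].
Qed.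

Lemma inner_scheduled_input_le n (Rm : 'M[R]_n) (Phi : R -> 'M[R]_n)
    (u : R -> 'cV[R]_n) s su nu T :
  Rm^T = Rm -> 0 <= nu ->
  (forall t, 0 <= t -> sigma_max (Phi t) <= su) ->
  (forall t, 0 <= t -> nu <= sigma_min (Phi t)) ->
  L2e u -> L2e (fun t => Phi t *m u t) -> 0 <= T ->
  s ^+ 2 * inner (fun t => Phi t *m u t) (fun t => Rm *m (Phi t *m u t)) T <=
  (if 0 < lambda_max Rm then lambda_max Rm * s ^+ 2 * su ^+ 2
   else lambda_max Rm * s ^+ 2 * nu ^+ 2) * norm2T2 u T.
Proof.
move=> symR nu0 Phisu nuPhi uL2e PuL2e T0.
have mI := measurable_I0 T; have iPu := integrable_quad_form Rm PuL2e T0.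
rewrite /norm2T2 /inner -!RintegralZl //; last exact: uL2e.2 T T0.
apply: le_Rintegral => //.
- exact: (@integrableZl _ _ _ mu _ mI _ _ iPu).
- exact: (@integrableZl _ _ _ mu _ mI _ _ (uL2e.2 T T0)).
move=> t /andP[t0 _].
by apply: scheduled_quad_le => //; [exact: Phisu|exact: nuPhi].
Qed.

Lemma inner_scheduled_output_le n (Q : 'M[R]_n) (Phi : R -> 'M[R]_n)
    (y : R -> 'cV[R]_n) s T :
  Q^T = Q -> lambda_max Q < 0 -> 0 < s ->
  (forall t, 0 <= t -> sigma_max (Phi t) <= s) -> loc_L2 y -> 0 <= T ->
  s ^+ 2 * inner y (fun t => Q *m y t) T <=
  lambda_max Q * norm2T2 (fun t => Phi t *m y t) T.
Proof.
move=> symQ l_lt0 s_gt0 Phis yL2 T0; set l := lambda_max Q.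
have s2_gt0 : 0 < s ^+ 2 by exact: exprn_gt0.
have quad_le t : vdot (y t) (Q *m y t) <= l * vdot (y t) (y t).
  exact: quad_le_lambda_max.
have quad_le0 t : vdot (y t) (Q *m y t) <= 0.
  exact: le_trans (quad_le t) (mulr_le0_ge0 (ltW l_lt0) (vdot_ge0 _)).
have [K K0 Qbound] := quad_form_bounded Q.
have nquad_ge0 t : I0 T t -> 0 <= - vdot (y t) (Q *m y t).
  by move=> _; rewrite oppr_ge0.
have Phiy_ge0 t : I0 T t -> 0 <= vdot (Phi t *m y t) (Phi t *m y t).
  by move=> _; exact: vdot_ge0.
have nl_gt0 : 0 < - l by rewrite oppr_gt0.
rewrite /norm2T2 /inner le0_RintegralE; last by move=> t _; exact: quad_le0.
rewrite -[l]opprK mulrN mulNr lerN2.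
rewrite -(ge0_RintegralZl mu s2_gt0 nquad_ge0).
rewrite -(ge0_RintegralZl mu nl_gt0 Phiy_ge0).
apply: ge0_le_Rintegral.
- by move=> t _; rewrite mulr_ge0 ?vdot_ge0 // ltW.
- move=> t /andP[t0 _]; rewrite mulrC.
  apply: le_trans (ler_wpM2r (ltW nl_gt0) (vdot_mulmx_le _ (Phis _ t0))) _.
  by rewrite -mulrA ler_pM2l // mulrC mulNr lerNl opprK quad_le.
- apply: (ge0_integral_lty_le (K := s ^+ 2 * K)) (loc_L2_lty yL2 T0).
  + by move=> t _; rewrite mulr_ge0 ?(ltW s2_gt0) // oppr_ge0.
  + by move=> t _; exact: vdot_ge0.
  + move=> t _.
    have nquad_le : - vdot (y t) (Q *m y t) <= K * vdot (y t) (y t).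
      by apply/ler_normlW; rewrite normrN Qbound.
    by apply: le_trans (ler_wpM2l (ltW s2_gt0) nquad_le) _; rewrite mulrA.
Qed.

Lemma inner_pseudo_commute n m (S : 'M[R]_(n, m)) (Phiu : R -> 'M[R]_m)
    (Phiy : R -> 'M[R]_n) (u : R -> 'cV[R]_m) (y : R -> 'cV[R]_n) T :
  (forall t, 0 <= t -> (Phiy t)^T *m S = S *m Phiu t) ->
  inner y (fun t => S *m (Phiu t *m u t)) T =
  inner (fun t => Phiy t *m y t) (fun t => S *m u t) T.
Proof.
move=> comm; apply: eq_Rintegral => t /[!inE] /andP[t0 _].
by rewrite mulmxA -comm // -mulmxA vdot_mulmx trmxK.
Qed.

End SupplyRate.

Theorem lemma1 (R : realType) (nx nu ny : nat)
  (f : 'cV[R]_nx -> 'cV[R]_nu -> 'cV[R]_nx)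
  (h : 'cV[R]_nx -> 'cV[R]_nu -> 'cV[R]_ny)
  (V : 'cV[R]_nx -> R) (Q : 'M[R]_ny) (S : 'M[R]_(ny, nu)) (Rm : 'M[R]_nu)
  (Phiu : R -> 'M[R]_nu) (Phiy : R -> 'M[R]_ny) :
  sym_mx Q -> neg_def Q -> sym_mx Rm ->
  L2e_outputs f h ->
  QSR_dissipative f h V Q S Rm ->
  scheduling_matrix Phiu -> scheduling_matrix Phiy ->
  (forall t, 0 <= t -> (Phiy t)^T *m S = S *m Phiu t) ->
  (exists t, 0 <= t /\ Phiy t != 0) ->
  let sy := sup_t (fun t => sigma_max (Phiy t)) in
  let su := sup_t (fun t => sigma_max (Phiu t)) in
  let nuu := inf_t (fun t => sigma_min (Phiu t)) in
  let eps := - lambda_max Q in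
  let delta := if 0 < lambda_max Rm then lambda_max Rm * sy ^+ 2 * su ^+ 2
               else lambda_max Rm * sy ^+ 2 * nuu ^+ 2 in
  0 < eps /\
  (forall z, 0 <= sy ^+ 2 * V z) /\
  forall (u : R -> 'cV[R]_nu) (x : R -> 'cV[R]_nx) (y : R -> 'cV[R]_ny) (T : R),
    L2e u -> trajectory f h (fun t => Phiu t *m u t) x y -> 0 <= T ->
    let ybar := fun t => Phiy t *m y t in
    sy ^+ 2 * (V (x T) - V (x 0)) <=
      - eps * norm2T2 ybar T + 2 * sy ^+ 2 * inner ybar (fun t => S *m u t) T
      + delta * norm2T2 u T.
Proof.
move=> symQ negQ symRm outL2 [V_ge0 dissip] schedu schedy comm.
move=> [t0 [t0_ge0 Phiy_t0]] sy su nuu eps delta.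
have sy_ub t : 0 <= t -> sigma_max (Phiy t) <= sy := sup_t_ub schedy.2.
have su_ub t : 0 <= t -> sigma_max (Phiu t) <= su := sup_t_ub schedu.2.
have sigma_min_ge0 t : 0 <= t -> 0 <= sigma_min (Phiu t).
  by move=> _; exact: sqrtr_ge0.
have nuu_lb t : 0 <= t -> nuu <= sigma_min (Phiu t) := inf_t_lb sigma_min_ge0.
have nuu_ge0 : 0 <= nuu := inf_t_ge0 sigma_min_ge0.
have sy_gt0 : 0 < sy := lt_le_trans (sigma_max_gt0 Phiy_t0) (sy_ub _ t0_ge0).
have lQ_lt0 : lambda_max Q < 0.
  exact: neg_def_lambda_max_lt0 (mx_neq0_dim_gt0 Phiy_t0) symQ negQ.
split; first by rewrite oppr_gt0.
split=> [z|]; first exact: mulr_ge0 (sqr_ge0 _) (V_ge0 z).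
move=> u x y T uL2e traj T_ge0; cbv zeta.
have PuL2e := L2e_mulmx schedu uL2e.
have := dissip _ _ _ _ PuL2e traj T_ge0.
rewrite (inner_pseudo_commute u y T comm) => supply.
have yL2 := outL2 _ _ _ PuL2e traj.
have output_le := inner_scheduled_output_le symQ lQ_lt0 sy_gt0 sy_ub yL2 T_ge0.
have input_le :=
  inner_scheduled_input_le sy symRm nuu_ge0 su_ub nuu_lb uL2e PuL2e T_ge0.
have := ler_wpM2l (ltW (exprn_gt0 2 sy_gt0)) supply.
rewrite /eps opprK; move: output_le input_le; rewrite -/delta; lra.
Qed.
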